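(* Let $\beta_{\mathtt{H}},\beta_{\mathtt{L}},\gamma_{\mathtt{H}},\gamma_{\mathtt{L}}>0$ with $\beta_{\mathtt{H}}/\gamma_{\mathtt{H}}>\beta_{\mathtt{L}}/\gamma_{\mathtt{L}}$ and $\beta_{\mathtt{H}}>\beta_{\mathtt{L}}$, let $q_{\mathtt{HL}},q_{\mathtt{LH}}\ge 0$, $\alpha\in(0,1)$, and for $z_{\mathtt{S}}\in[0,1]$ set $\hat\beta_{\mathtt{Q}}(z_{\mathtt{S}}):=\beta_{\mathtt{Q}}(\alpha z_{\mathtt{S}}+1-z_{\mathtt{S}})$ for $\mathtt{Q}\in\{\mathtt{H},\mathtt{L}\}$. Suppose that for each $z_{\mathtt{S}}\in[0,1]$ the system \begin{align*} \dot{\mathtt{I}}_{\mathtt{H}}&=\hat\beta_{\mathtt{H}}(z_{\mathtt{S}})\mathtt{I}_{\mathtt{H}}(1-\mathtt{I}_{\mathtt{H}}-\mathtt{I}_{\mathtt{L}})+q_{\mathtt{LH}}\mathtt{I}_{\mathtt{L}}-(q_{\mathtt{HL}}+\gamma_{\mathtt{H}})\mathtt{I}_{\mathtt{H}},\\ \dot{\mathtt{I}}_{\mathtt{L}}&=\hat\beta_{\mathtt{L}}(z_{\mathtt{S}})\mathtt{I}_{\mathtt{L}}(1-\mathtt{I}_{\mathtt{H}}-\mathtt{I}_{\mathtt{L}})+q_{\mathtt{HL}}\mathtt{I}_{\mathtt{H}}-(q_{\mathtt{LH}}+\gamma_{\mathtt{L}})\mathtt{I}_{\mathtt{L}} \end{align*}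 has an endemic equilibrium $(\mathtt{I}^\star_{\mathtt{H}}(z_{\mathtt{S}}),\mathtt{I}^\star_{\mathtt{L}}(z_{\mathtt{S}}))\in(0,1)^2$. Then $\mathtt{I}^\star_{\mathtt{H}}(z_{\mathtt{S}})$ and $\mathtt{I}^\star_{\mathtt{L}}(z_{\mathtt{S}})$ are monotonically decreasing in $z_{\mathtt{S}}$.
   Context: Bi-virus SIS model with strains $\mathtt{H},\mathtt{L}$: $\mathtt{I}_{\mathtt{H}},\mathtt{I}_{\mathtt{L}}$ are infected fractions, $\beta$'s transmission rates, $\gamma$'s recovery rates, $q_{\mathtt{HL}},q_{\mathtt{LH}}$ mutation rates, $z_{\mathtt{S}}$ fraction of susceptibles adopting protection, protection scaling infection rates by $\alpha$. *)

From Stdlib Require Import Reals Lra.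
Open Scope R_scope.

Definition betahat (alpha beta zS : R) : R := beta * (alpha * zS + 1 - zS).

Definition rhsH (betaH gammaH qHL qLH alpha zS IH IL : R) : R :=
  betahat alpha betaH zS * IH * (1 - IH - IL) + qLH * IL - (qHL + gammaH) * IH.

Definition rhsL (betaL gammaL qHL qLH alpha zS IH IL : R) : R :=
  betahat alpha betaL zS * IL * (1 - IH - IL) + qHL * IH - (qLH + gammaL) * IL.

Definition endemic_equilibrium
  (betaH betaL gammaH gammaL qHL qLH alpha zS IH IL : R) : Prop :=
  0 < IH < 1 /\ 0 < IL < 1 /\
  rhsH betaH gammaH qHL qLH alpha zS IH IL = 0 /\
  rhsL betaL gammaL qHL qLH alpha zS IH IL = 0.

(** At an endemic equilibrium, eliminating the common susceptible term between
    the two equations shows that the ratio [r = I_L / I_H] is a positive root of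
    a quadratic whose coefficients do not involve [z_S]; that quadratic has at
    most one positive root, so [r] does not depend on [z_S].  The first equation
    divided by [I_H] then reads [hat beta_H(z_S) (1 - I_H - I_L) = q_HL + gamma_H
    - q_LH r], a constant.  Since [hat beta_H] decreases in [z_S], the
    susceptible fraction [1 - (1 + r) I_H] increases, so [I_H] and
    [I_L = r I_H] decrease. *)

From Stdlib Require Import Reals Lra Psatz.
Open Scope R_scope.

Lemma betahat_pos (alpha beta zS : R) :
  0 < beta -> 0 < alpha < 1 -> 0 <= zS <= 1 -> 0 < betahat alpha beta zS.
Proof.
  intros Hb Ha Hz; unfold betahat.
  apply Rmult_lt_0_compat; [assumption | nra].
Qed.

Lemma betahat_decreasing (alpha beta z1 z2 : R) :
  0 < beta -> alpha < 1 -> z1 < z2 -> betahat alpha beta z2 < betahat alpha beta z1.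
Proof.
  intros Hb Ha Hz; unfold betahat.
  apply Rmult_lt_compat_l; [assumption | nra].
Qed.

Lemma quadratic_pos_root_unique (a b c r1 r2 : R) :
  0 <= a -> 0 <= c -> (a = 0 -> c = 0 -> 0 < b) ->
  0 < r1 -> 0 < r2 ->
  a * r1 ^ 2 + b * r1 - c = 0 -> a * r2 ^ 2 + b * r2 - c = 0 -> r1 = r2.
Proof.
  intros Ha Hc Hb Hr1 Hr2 E1 E2.
  destruct (Req_dec r1 r2) as [|Hne]; [assumption | exfalso].
  assert (Hsum : a * (r1 + r2) + b = 0).
  { assert (Hf : (r1 - r2) * (a * (r1 + r2) + b) = 0) by lra.
    apply Rmult_integral in Hf as [Hf|Hf]; [lra | exact Hf]. }
  (* Vieta: the product of the roots is [- c / a <= 0]. *)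
  assert (Hprod : a * (r1 * r2) + c = 0).
  { replace b with (- (a * (r1 + r2))) in E1 by lra.
    replace (a * (r1 * r2) + c) with (- (a * r1 ^ 2 + - (a * (r1 + r2)) * r1 - c))
      by ring.
    lra. }
  assert (Hr12 : 0 < r1 * r2) by (apply Rmult_lt_0_compat; assumption).
  assert (Hc0 : c = 0) by (pose proof (Rmult_le_pos _ _ Ha (Rlt_le _ _ Hr12)); lra).
  assert (Ha0 : a = 0).
  { assert (Ham : a * (r1 * r2) = 0) by lra.
    apply Rmult_integral in Ham as [|]; [assumption | lra]. }
  specialize (Hb Ha0 Hc0). rewrite Ha0 in Hsum. lra.
Qed.

Definition ratio_poly (betaH betaL gammaH gammaL qHL qLH r : R) : R :=
  betaL * qLH * r ^ 2 + (betaH * (qLH + gammaL) - betaL * (qHL + gammaH)) * r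
  - betaH * qHL.

Section Equilibrium.

Context {betaH betaL gammaH gammaL qHL qLH alpha : R}.

Local Notation equilibrium :=
  (endemic_equilibrium betaH betaL gammaH gammaL qHL qLH alpha).

Lemma equilibrium_ratio_root {zS IH IL : R} :
  equilibrium zS IH IL -> ratio_poly betaH betaL gammaH gammaL qHL qLH (IL / IH) = 0.
Proof.
  intros [[HIH _] [_ [EH EL]]].
  assert (Hkey : IH ^ 2 * ratio_poly betaH betaL gammaH gammaL qHL qLH (IL / IH)
                 = betaL * IL * rhsH betaH gammaH qHL qLH alpha zS IH IL
                   - betaH * IH * rhsL betaL gammaL qHL qLH alpha zS IH IL).
  { unfold ratio_poly, rhsH, rhsL, betahat. field. lra. }
  rewrite EH, EL, !Rmult_0_r, Rminus_0_r in Hkey.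
  apply Rmult_integral in Hkey as [H0|H0]; [nra | assumption].
Qed.

Lemma equilibrium_ratio_unique {z1 z2 IH1 IL1 IH2 IL2 : R} :
  0 < betaH -> 0 < betaL -> 0 <= qHL -> 0 <= qLH ->
  betaL * gammaH < betaH * gammaL ->
  equilibrium z1 IH1 IL1 -> equilibrium z2 IH2 IL2 -> IL1 / IH1 = IL2 / IH2.
Proof.
  intros HbH HbL HqHL HqLH Hcross E1 E2.
  pose proof (equilibrium_ratio_root E1) as R1.
  pose proof (equilibrium_ratio_root E2) as R2.
  destruct E1 as [[? _] [[? _] _]]; destruct E2 as [[? _] [[? _] _]].
  apply (quadratic_pos_root_unique (betaL * qLH)
           (betaH * (qLH + gammaL) - betaL * (qHL + gammaH)) (betaH * qHL)).
  - apply Rmult_le_pos; lra.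
  - apply Rmult_le_pos; lra.
  - intros HA HC.
    assert (qLH = 0) by (apply Rmult_integral in HA as [|]; lra).
    assert (qHL = 0) by (apply Rmult_integral in HC as [|]; lra).
    subst; lra.
  - apply Rdiv_lt_0_compat; assumption.
  - apply Rdiv_lt_0_compat; assumption.
  - exact R1.
  - exact R2.
Qed.

Lemma equilibrium_susceptible_pos {zS IH IL : R} :
  0 < gammaH -> 0 < gammaL ->
  0 < betahat alpha betaH zS -> 0 < betahat alpha betaL zS ->
  equilibrium zS IH IL -> 0 < 1 - IH - IL.
Proof.
  intros HgH HgL HbH HbL [[? _] [[? _] [EH EL]]].
  unfold rhsH, rhsL in EH, EL.
  set (S := 1 - IH - IL) in *.
  assert (Hsum : S * (betahat alpha betaH zS * IH + betahat alpha betaL zS * IL)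
                 = gammaH * IH + gammaL * IL) by lra.
  assert (Hinf : 0 < betahat alpha betaH zS * IH + betahat alpha betaL zS * IL)
    by (apply Rplus_lt_0_compat; apply Rmult_lt_0_compat; assumption).
  destruct (Rlt_or_le 0 S) as [|HS]; [assumption | nra].
Qed.

Lemma equilibrium_balance {zS IH IL : R} :
  equilibrium zS IH IL ->
  betahat alpha betaH zS * (1 - IH - IL) = qHL + gammaH - qLH * (IL / IH).
Proof.
  intros [[? _] [_ [EH _]]].
  unfold rhsH in EH.
  apply (Rmult_eq_reg_r IH); [| lra].
  field_simplify; [lra | lra].
Qed.

End Equilibrium.

Theorem lemma3 (betaH betaL gammaH gammaL qHL qLH alpha : R)
  (IHs ILs : R -> R) :
  0 < betaH -> 0 < betaL -> 0 < gammaH -> 0 < gammaL ->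
  betaH / gammaH > betaL / gammaL ->
  betaH > betaL ->
  0 <= qHL -> 0 <= qLH ->
  0 < alpha < 1 ->
  (forall zS, 0 <= zS <= 1 ->
     endemic_equilibrium betaH betaL gammaH gammaL qHL qLH alpha zS (IHs zS) (ILs zS)) ->
  forall z1 z2, 0 <= z1 -> z1 < z2 -> z2 <= 1 ->
    IHs z2 < IHs z1 /\ ILs z2 < ILs z1.
Proof.
  intros HbH HbL HgH HgL Hratio _ HqHL HqLH Ha Heq z1 z2 Hz1 Hz12 Hz2.
  assert (Hcross : betaL * gammaH < betaH * gammaL).
  { apply Rmult_gt_compat_r with (r := gammaH * gammaL) in Hratio; [| nra].
    field_simplify in Hratio; lra. }
  pose proof (Heq z1 ltac:(lra)) as E1; pose proof (Heq z2 ltac:(lra)) as E2.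
  pose proof (equilibrium_ratio_unique HbH HbL HqHL HqLH Hcross E1 E2) as Hr.
  pose proof (equilibrium_balance E1) as B1.
  pose proof (equilibrium_balance E2) as B2.
  pose proof (equilibrium_susceptible_pos HgH HgL
                (betahat_pos alpha betaH z1 HbH Ha ltac:(lra))
                (betahat_pos alpha betaL z1 HbL Ha ltac:(lra)) E1) as HS1.
  pose proof (betahat_pos alpha betaH z2 HbH Ha ltac:(lra)) as Hb2.
  pose proof (betahat_decreasing alpha betaH z1 z2 HbH (proj2 Ha) Hz12) as Hb12.
  rewrite <- Hr, <- B1 in B2.
  assert (HS12 : 1 - IHs z1 - ILs z1 < 1 - IHs z2 - ILs z2) by nra.
  destruct E1 as [[? _] [[? _] _]]; destruct E2 as [[? _] [[? _] _]].
  set (r := ILs z1 / IHs z1) in Hr.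
  assert (HL1 : ILs z1 = r * IHs z1) by (unfold r; field; lra).
  assert (HL2 : ILs z2 = r * IHs z2) by (rewrite Hr; field; lra).
  assert (0 < r) by (unfold r; apply Rdiv_lt_0_compat; lra).
  rewrite HL1, HL2 in *; split; nra.
Qed.
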